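(* Let $b>1$ be an integer, let $H$ be a generalized $b$-happy function with digit mean $\mu$ and digit standard deviation $\sigma$, and let $C\subseteq\mathbb{N}$. Assume there is a positive integer $n_1$ satisfying bound (B): (B1) $4\left(1+3\mu+\sqrt{2}\,\sigma\, b^{5n_1/8}\right)\le b^{n_1-1}$, (B2) $\sqrt{3\mu b}\,\sigma\le b^{3n_1/8}$, (B3) $4\mu\left(3\mu+1+b^{3n_1/4}+2\sigma\mu^{-1/2}b^{5n_1/8}\right)\le b^{n_1-1}$, and an $n_1$-strict interval $I_1$ with type-$C$ density $d_1$. Then for every $N\in\mathbb{N}$ there exist an integer $n>N$ and an $n$-strict interval $I$ whose type-$C$ density is at least $$d_1\exp\!\left(-\frac{2}{b^{n_1/4}-1}-\frac{4\sigma}{\sqrt{\mu}\,\left(b^{n_1/8}-1\right)}\right).$$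
   Context: A generalized $b$-happy function: fix an integer $b>1$ and non-negative integers $h(0),\dots,h(b-1)$ with $h(0)=0$, $h(1)=1$; for $n=\sum_{i=0}^k a_ib^i$ in base $b$, $H(n)=\sum_{i=0}^k h(a_i)$. Digit mean $\mu=\frac1b\sum_{j=0}^{b-1}h(j)$, digit variance $\sigma^2=\frac1b\sum_{j=0}^{b-1}(h(j)-\mu)^2$. An integer $n$ is type-$C$ if $H^k(n)\in C$ for some integer $k\ge0$. An integer interval $[a,c]$ is the set of integers $x$ with $a\le x\le c$; $|I|$ is its cardinality. The type-$C$ density of a finite nonempty integer interval $I$ is $|\{n\in I:n\text{ type-}C\}|/|I|$. For a positive integer $m$, an integer interval $I$ is $m$-strict if $I\subseteq[b^{m-1},b^m-1]$ and $|I|=b^{3m/4}$. *)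

From Stdlib Require Import Reals Lra Lia Arith List ClassicalEpsilon.
Open Scope R_scope.

(* Generalized b-happy function: H(n) = sum of h(a_i) over the base-b digits
   a_i of n.  [Hfuel f b h n] peels off f digits; fuel n suffices for b >= 2
   since n / b < n for n > 0. *)
Fixpoint Hfuel (fuel b : nat) (h : nat -> nat) (n : nat) : nat :=
  match fuel with
  | O => O
  | S f => if Nat.eqb n 0 then O else (h (n mod b) + Hfuel f b h (n / b))%nat
  end.

Definition happyH (b : nat) (h : nat -> nat) (n : nat) : nat := Hfuel n b h n.

Definition digit_mean (b : nat) (h : nat -> nat) : R :=
  (/ INR b) * fold_right Rplus 0 (map (fun j => INR (h j)) (seq 0 b)).

Definition digit_variance (b : nat) (h : nat -> nat) : R :=
  (/ INR b) * fold_right Rplus 0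
     (map (fun j => (INR (h j) - digit_mean b h) ^ 2) (seq 0 b)).

Definition digit_sd (b : nat) (h : nat -> nat) : R := sqrt (digit_variance b h).

Definition typeC (b : nat) (h : nat -> nat) (C : nat -> Prop) (n : nat) : Prop :=
  exists k : nat, C (Nat.iter k (happyH b h) n).

(* The integer interval [a, c]; its cardinality is (c + 1 - a) (0 if c < a). *)
Definition icard (a c : nat) : nat := (S c - a)%nat.

Definition indicator (P : Prop) : nat :=
  if excluded_middle_informative P then 1%nat else 0%nat.

Definition typeC_count (b : nat) (h : nat -> nat) (C : nat -> Prop) (a c : nat) : nat :=
  fold_right Nat.add 0%nat
    (map (fun x => indicator (typeC b h C x)) (seq a (icard a c))).

Definition typeC_density (b : nat) (h : nat -> nat) (C : nat -> Prop) (a c : nat) : R :=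
  INR (typeC_count b h C a c) / INR (icard a c).

Definition strict_interval (b m a c : nat) : Prop :=
  (b ^ (m - 1) <= a)%nat /\ (c <= b ^ m - 1)%nat /\
  INR (icard a c) = Rpower (INR b) (3 * INR m / 4).

From Stdlib Require Import Reals Lra Lia Psatz List Classical ClassicalEpsilon ZArith.
Open Scope R_scope.

(** Write [Q = b ^ (n/8)], so that an [n]-strict interval [[a, c]] has [Q ^ 6] elements.
    Put the [k]-digit prefixes [P] with digit sum [s] in front of all [3k]-digit strings
    [y]: the integers [P b ^ (3k) + y] fill a [4k]-strict interval on which [H] takes the
    values [s + H y].  By Chebyshev, all but a fraction [1 / Q ^ 2] of the [y] have
    [|H y - 3 k mu| <= t], and for those the values [s + H y], as [s] runs over about
    [Q ^ 6 + 2 t + 3 mu] consecutive integers, sweep over [[a, c]].  Averaging over [s],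
    some prefix yields a [4k]-strict interval of type-C density at least
    [(1 - Q ^ -2) / (1 + (2 t + 3 mu + 1) / Q ^ 6)] times that of [[a, c]], which is at
    least [exp (- 2 / Q ^ 2 - 4 sigma / (sqrt mu Q))] once [k] and [t] are chosen using
    (B1) and (B3).  As [4k >= 2n] and the bounds persist for larger [n], the step can be
    iterated; the losses form geometric series in [b ^ (- n1 / 4)] and [b ^ (- n1 / 8)]. *)

(** * Sums over ranges of naturals *)

Fixpoint nsum (f : nat -> nat) (s n : nat) : nat :=
  match n with O => O | S n' => (f s + nsum f (S s) n')%nat end.

Fixpoint rsum (f : nat -> R) (s n : nat) : R :=
  match n with O => 0 | S n' => f s + rsum f (S s) n' end.

Lemma nsum_fold f s n : fold_right Nat.add 0%nat (map f (seq s n)) = nsum f s n.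
Proof. revert s; induction n; intros s; simpl; auto. Qed.

Lemma rsum_fold f s n : fold_right Rplus 0 (map f (seq s n)) = rsum f s n.
Proof. revert s; induction n; intros s; simpl; auto; rewrite IHn; auto. Qed.

Lemma nsum_ext f g s n :
  (forall i, (s <= i < s + n)%nat -> f i = g i) -> nsum f s n = nsum g s n.
Proof.
  revert s; induction n; intros s H; simpl; auto.
  rewrite (H s), (IHn (S s)); auto; [intros; apply H|]; lia.
Qed.

Lemma rsum_ext f g s n :
  (forall i, (s <= i < s + n)%nat -> f i = g i) -> rsum f s n = rsum g s n.
Proof.
  revert s; induction n; intros s H; simpl; auto.
  rewrite (H s), (IHn (S s)); auto; [intros; apply H|]; lia.
Qed.

Lemma nsum_le f g s n :
  (forall i, (s <= i < s + n)%nat -> (f i <= g i)%nat) -> (nsum f s n <= nsum g s n)%nat.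
Proof.
  revert s; induction n; intros s H; simpl; auto.
  assert (f s <= g s)%nat by (apply H; lia).
  assert (nsum f (S s) n <= nsum g (S s) n)%nat by (apply IHn; intros; apply H; lia).
  lia.
Qed.

Lemma rsum_le f g s n :
  (forall i, (s <= i < s + n)%nat -> f i <= g i) -> rsum f s n <= rsum g s n.
Proof.
  revert s; induction n; intros s H; simpl; [lra|].
  assert (f s <= g s) by (apply H; lia).
  assert (rsum f (S s) n <= rsum g (S s) n) by (apply IHn; intros; apply H; lia).
  lra.
Qed.

Lemma rsum_nonneg f s n : (forall i, 0 <= f i) -> 0 <= rsum f s n.
Proof.
  intros H; revert s; induction n; intros s; simpl; [lra|].
  specialize (H s); specialize (IHn (S s)); lra.
Qed.

Lemma nsum_cat f s p q : nsum f s (p + q) = (nsum f s p + nsum f (s + p) q)%nat.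
Proof.
  revert s; induction p; intros s; simpl; [rewrite Nat.add_0_r; auto|].
  rewrite IHp, <- plus_n_Sm; simpl; lia.
Qed.

Lemma rsum_cat f s p q : rsum f s (p + q) = rsum f s p + rsum f (s + p) q.
Proof.
  revert s; induction p; intros s; simpl; [rewrite Nat.add_0_r; lra|].
  rewrite IHp, <- plus_n_Sm; simpl; lra.
Qed.

Lemma nsum_shift f s d n : nsum f (s + d) n = nsum (fun i => f (i + d)%nat) s n.
Proof. revert s; induction n; intros s; simpl; auto; rewrite <- IHn; auto. Qed.

Lemma rsum_shift f s d n : rsum f (s + d) n = rsum (fun i => f (i + d)%nat) s n.
Proof. revert s; induction n; intros s; simpl; auto; rewrite <- IHn; auto. Qed.

Lemma nsum_add f g s n : nsum (fun i => f i + g i)%nat s n = (nsum f s n + nsum g s n)%nat.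
Proof. revert s; induction n; intros s; simpl; auto; rewrite IHn; lia. Qed.

Lemma rsum_add f g s n : rsum (fun i => f i + g i) s n = rsum f s n + rsum g s n.
Proof. revert s; induction n; intros s; simpl; [|rewrite IHn]; lra. Qed.

Lemma nsum_mul_l c f s n : nsum (fun i => c * f i)%nat s n = (c * nsum f s n)%nat.
Proof. revert s; induction n; intros s; simpl; auto; rewrite IHn; lia. Qed.

Lemma rsum_mul_l c f s n : rsum (fun i => c * f i) s n = c * rsum f s n.
Proof. revert s; induction n; intros s; simpl; [|rewrite IHn]; lra. Qed.

Lemma nsum_const c s n : nsum (fun _ => c) s n = (n * c)%nat.
Proof. revert s; induction n; intros s; simpl; auto; rewrite IHn; lia. Qed.

Lemma rsum_const c s n : rsum (fun _ => c) s n = INR n * c.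
Proof. revert s; induction n; intros s; [simpl; lra|]. simpl rsum; rewrite IHn, S_INR; lra. Qed.

Lemma INR_nsum f s n : INR (nsum f s n) = rsum (fun i => INR (f i)) s n.
Proof. revert s; induction n; intros s; auto. simpl nsum; rewrite plus_INR, IHn; auto. Qed.

Lemma nsum_exchange (F : nat -> nat -> nat) s1 n1 s2 n2 :
  nsum (fun i => nsum (F i) s2 n2) s1 n1 = nsum (fun j => nsum (fun i => F i j) s1 n1) s2 n2.
Proof.
  revert s1; induction n1; intros s1; simpl.
  - rewrite nsum_const; lia.
  - rewrite IHn1, <- nsum_add; auto.
Qed.

Lemma nsum_subrange_le f s n a m :
  (s <= a)%nat -> (a + m <= s + n)%nat -> (nsum f a m <= nsum f s n)%nat.
Proof.
  intros H1 H2.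
  replace n with ((a - s) + (m + (s + n - (a + m))))%nat by lia.
  rewrite !nsum_cat; replace (s + (a - s))%nat with a by lia; lia.
Qed.

Lemma rsum_blocks g b N :
  rsum g 0 (N * b) = rsum (fun q => rsum (fun r => g (q * b + r)%nat) 0 b) 0 N.
Proof.
  induction N; auto.
  replace (S N * b)%nat with (N * b + b)%nat by lia.
  rewrite rsum_cat, IHN, <- Nat.add_1_r, rsum_cat; simpl.
  rewrite Rplus_0_r, (rsum_shift g 0 (N * b)).
  f_equal; apply rsum_ext; intros; f_equal; lia.
Qed.

Lemma exists_ge_average f s n X :
  (0 < n)%nat -> (X <= nsum f s n)%nat -> exists i, (s <= i < s + n)%nat /\ (X <= n * f i)%nat.
Proof.
  intros Hn HX; apply NNPP; intros Hno.
  assert (Hall : forall i, (s <= i < s + n)%nat -> (n * f i < X)%nat).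
  { intros i Hi; destruct (le_lt_dec X (n * f i)); auto; exfalso; eauto. }
  assert (HX0 : (0 < X)%nat) by (specialize (Hall s); lia).
  assert (nsum (fun i => n * f i) s n <= nsum (fun _ => X - 1) s n)%nat
    by (apply nsum_le; intros i Hi; specialize (Hall i Hi); lia).
  rewrite nsum_mul_l, nsum_const in *.
  assert (n * X <= n * nsum f s n)%nat by (apply Nat.mul_le_mono_l; auto).
  nia.
Qed.

(** * Digit sums *)

Fixpoint repunit (b s : nat) : nat :=
  match s with O => O | S s' => (repunit b s' * b + 1)%nat end.

Lemma repunit_bounds b s : (2 <= b)%nat -> (1 <= s)%nat -> (b ^ (s - 1) <= repunit b s < b ^ s)%nat.
Proof.
  intros Hb.
  induction s as [|[|s] IHs]; intros Hs; [lia | simpl; lia|].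
  specialize (IHs ltac:(lia)); replace (S (S s) - 1)%nat with (S s) by lia.
  replace (S s - 1)%nat with s in IHs by lia.
  change (repunit b (S (S s))) with (repunit b (S s) * b + 1)%nat.
  rewrite (Nat.pow_succ_r' b (S s)); rewrite Nat.pow_succ_r' in IHs |- *; nia.
Qed.

Section DigitSums.

Variables (b : nat) (h : nat -> nat).
Hypothesis Hb : (2 <= b)%nat.

Lemma Hfuel_fuel_irrelevant f1 f2 y :
  (y <= f1)%nat -> (y <= f2)%nat -> Hfuel f1 b h y = Hfuel f2 b h y.
Proof.
  revert f2 y; induction f1; intros f2 y H1 H2; destruct f2;
    try (replace y with 0%nat by lia; reflexivity).
  simpl; destruct (Nat.eqb_spec y 0); auto.
  assert (y / b < y)%nat by (apply Nat.div_lt; lia).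
  f_equal; apply IHf1; lia.
Qed.

Hypothesis h0 : h 0%nat = 0%nat.

Lemma happyH_digit q r : (r < b)%nat -> happyH b h (q * b + r) = (h r + happyH b h q)%nat.
Proof.
  intros Hr; unfold happyH.
  destruct (q * b + r)%nat as [|m] eqn:E.
  - assert (q = 0 /\ r = 0)%nat as [-> ->] by nia; rewrite h0; reflexivity.
  - simpl; rewrite <- E.
    assert (Emod : ((q * b + r) mod b)%nat = r)
      by (rewrite Nat.add_comm, Nat.Div0.mod_add; apply Nat.mod_small; auto).
    assert (Ediv : ((q * b + r) / b)%nat = q)
      by (rewrite Nat.add_comm, Nat.div_add, Nat.div_small by (auto; lia); auto).
    rewrite Emod, Ediv; f_equal; apply Hfuel_fuel_irrelevant; nia.
Qed.

Lemma happyH_concat P L y :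
  (y < b ^ L)%nat -> happyH b h (P * b ^ L + y) = (happyH b h P + happyH b h y)%nat.
Proof.
  revert y; induction L; intros y Hy.
  - simpl in Hy; replace y with 0%nat by lia.
    rewrite Nat.mul_1_r, Nat.add_0_r; change (happyH b h 0) with 0%nat; lia.
  - set (q := (y / b)%nat); set (r := (y mod b)%nat).
    assert (Ey : y = (q * b + r)%nat) by (rewrite Nat.mul_comm; apply Nat.div_mod; lia).
    assert (Hr : (r < b)%nat) by (apply Nat.mod_upper_bound; lia).
    assert (Hq : (q < b ^ L)%nat) by (rewrite Ey in Hy; simpl in Hy; nia).
    replace (P * b ^ S L + y)%nat with ((P * b ^ L + q) * b + r)%nat by (rewrite Ey; simpl; nia).
    rewrite Ey, !happyH_digit, IHL by auto; lia.
Qed.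

Lemma happyH_repunit s : h 1%nat = 1%nat -> happyH b h (repunit b s) = s.
Proof.
  intros h1; induction s; auto; simpl.
  rewrite happyH_digit, IHs, h1 by lia; lia.
Qed.

End DigitSums.

(** * Mean and variance of the digit sum *)

Section DigitStatistics.

Variables (b : nat) (h : nat -> nat).
Hypothesis Hb : (2 <= b)%nat.
Hypothesis h0 : h 0%nat = 0%nat.

Let mu := digit_mean b h.
Let v := digit_variance b h.

Lemma rsum_digit_dev : rsum (fun r => INR (h r) - mu) 0 b = 0.
Proof.
  assert (INR b <> 0) by (apply not_0_INR; lia).
  unfold mu, digit_mean; rewrite rsum_fold; unfold Rminus.
  rewrite (rsum_add (fun r => INR (h r))
                    (fun _ => - (/ INR b * rsum (fun j => INR (h j)) 0 b))), rsum_const.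
  field; auto.
Qed.

Lemma rsum_digit_dev_sq : rsum (fun r => (INR (h r) - mu) ^ 2) 0 b = INR b * v.
Proof.
  assert (INR b <> 0) by (apply not_0_INR; lia).
  unfold v, digit_variance; rewrite rsum_fold; fold mu; field; auto.
Qed.

(** The [L] digits of a uniformly chosen [y < b ^ L] are independent and uniform,
    so the variances of their [h]-values add up. *)
Lemma rsum_happyH_dev_sq L :
  rsum (fun y => (INR (happyH b h y) - INR L * mu) ^ 2) 0 (b ^ L) = INR L * v * INR b ^ L.
Proof.
  induction L.
  - simpl; lra.
  - replace (b ^ S L)%nat with (b ^ L * b)%nat by (simpl; lia).
    rewrite rsum_blocks.
    transitivity (rsum (fun q => INR b * v + INR b * (INR (happyH b h q) - INR L * mu) ^ 2)
                    0 (b ^ L)).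
    + apply rsum_ext; intros q _.
      set (D := INR (happyH b h q) - INR L * mu).
      transitivity (rsum (fun r => (INR (h r) - mu) ^ 2 + 2 * D * (INR (h r) - mu)
                                   + (fun _ => D ^ 2) r) 0 b).
      * apply rsum_ext; intros r Hr.
        rewrite happyH_digit, plus_INR, S_INR by (auto; lia); unfold D; ring.
      * rewrite !rsum_add, rsum_mul_l, rsum_const, rsum_digit_dev, rsum_digit_dev_sq; ring.
    + rewrite rsum_add, rsum_const, rsum_mul_l, IHL, pow_INR, S_INR; simpl; ring.
Qed.

End DigitStatistics.

Lemma digit_mean_mul_ge1 b h : (2 <= b)%nat -> h 1%nat = 1%nat -> 1 <= digit_mean b h * INR b.
Proof.
  intros Hb h1; unfold digit_mean; rewrite rsum_fold.
  assert (INR b <> 0) by (apply not_0_INR; lia).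
  replace (/ INR b * rsum (fun j => INR (h j)) 0 b * INR b)
    with (rsum (fun j => INR (h j)) 0 b) by (field; auto).
  replace b with (2 + (b - 2))%nat by lia; rewrite rsum_cat; simpl; rewrite h1.
  pose proof (rsum_nonneg (fun j => INR (h j)) 2 (b - 2) (fun i => pos_INR _)).
  pose proof (pos_INR (h 0%nat)); simpl in *; lra.
Qed.

Lemma digit_mean_pos b h : (2 <= b)%nat -> h 1%nat = 1%nat -> 0 < digit_mean b h.
Proof.
  intros Hb h1; pose proof (digit_mean_mul_ge1 b h Hb h1).
  assert (0 < INR b) by (apply lt_0_INR; lia); nra.
Qed.

Lemma digit_variance_pos b h :
  (2 <= b)%nat -> h 0%nat = 0%nat -> h 1%nat = 1%nat -> 0 < digit_variance b h.
Proof.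
  intros Hb h0 h1; unfold digit_variance; rewrite rsum_fold.
  set (mu := digit_mean b h).
  apply Rmult_lt_0_compat; [apply Rinv_0_lt_compat, lt_0_INR; lia|].
  replace b with (2 + (b - 2))%nat by lia; rewrite rsum_cat; simpl; rewrite h0, h1.
  pose proof (rsum_nonneg (fun j => (INR (h j) - mu) ^ 2) 2 (b - 2) (fun i => pow2_ge_0 _)).
  simpl in *; nra.
Qed.

(** * Counting type-C integers *)

Lemma indicator_mono (P Q : Prop) : (P -> Q) -> (indicator P <= indicator Q)%nat.
Proof.
  intros H; unfold indicator.
  destruct (excluded_middle_informative P), (excluded_middle_informative Q); auto; tauto.
Qed.

Lemma typeC_happyH b h C x : typeC b h C (happyH b h x) -> typeC b h C x.
Proof. intros [k Hk]; exists (S k); rewrite Nat.iter_succ_r; auto. Qed.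

Lemma typeC_density_nonneg b h C a c : 0 <= typeC_density b h C a c.
Proof.
  unfold typeC_density, Rdiv; destruct (icard a c) eqn:E.
  - simpl; rewrite Rinv_0, Rmult_0_r; lra.
  - apply Rmult_le_pos; [apply pos_INR|left; apply Rinv_0_lt_compat, lt_0_INR; lia].
Qed.

(** Double counting: for each good [y], the integers [s + G y] with [lo <= s <= k]
    sweep over the whole of [[a, c]]. *)
Lemma shift_average (U : nat -> Prop) (G : nat -> nat) (good : nat -> bool) (Y a c lo k : nat) :
  (lo <= k)%nat -> (a <= S c)%nat ->
  (forall y, (y < Y)%nat -> good y = true -> (lo + G y <= a)%nat /\ (c <= k + G y)%nat) ->
  exists s, (lo <= s <= k)%nat /\
    (nsum (fun y => Nat.b2n (good y)) 0 Y * nsum (fun z => indicator (U z)) a (S c - a)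
      <= (S k - lo) * nsum (fun y => indicator (U (s + G y))) 0 Y)%nat.
Proof.
  intros Hlo Hac Hgood.
  set (T := nsum (fun z => indicator (U z)) a (S c - a)).
  assert (Hsum : (nsum (fun y => Nat.b2n (good y)) 0 Y * T <=
      nsum (fun s => nsum (fun y => indicator (U (s + G y))) 0 Y) lo (S k - lo))%nat).
  { rewrite nsum_exchange, Nat.mul_comm, <- nsum_mul_l; apply nsum_le; intros y Hy.
    destruct (good y) eqn:E; simpl; [|lia].
    destruct (Hgood y ltac:(lia) E) as [G1 G2].
    rewrite Nat.mul_1_r; unfold T.
    transitivity (nsum (fun z => indicator (U z)) (lo + G y) (S k - lo)).
    - apply nsum_subrange_le; lia.
    - rewrite nsum_shift; auto. }
  destruct (exists_ge_average _ lo (S k - lo) _ ltac:(lia) Hsum) as [s [Hs1 Hs2]].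
  exists s; split; [lia|auto].
Qed.

Definition near (g : nat -> nat) (m t : R) (y : nat) : bool :=
  if Rle_dec (Rabs (INR (g y) - m)) t then true else false.

Lemma nsum_near_far g m t Y :
  (nsum (fun y => Nat.b2n (near g m t y)) 0 Y
   + nsum (fun y => Nat.b2n (negb (near g m t y))) 0 Y = Y)%nat.
Proof.
  rewrite <- nsum_add, (nsum_ext _ (fun _ => 1%nat)), nsum_const; [lia|].
  intros; destruct (near g m t i); auto.
Qed.

Lemma chebyshev_count (g : nat -> nat) (m t : R) Y : 0 <= t ->
  INR (nsum (fun y => Nat.b2n (negb (near g m t y))) 0 Y) * t ^ 2
  <= rsum (fun y => (INR (g y) - m) ^ 2) 0 Y.
Proof.
  intros Ht; rewrite INR_nsum, Rmult_comm, <- rsum_mul_l.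
  apply rsum_le; intros y _; unfold near.
  destruct (Rle_dec (Rabs (INR (g y) - m)) t) as [H|H]; simpl INR.
  - rewrite Rmult_0_r; apply pow2_ge_0.
  - rewrite Rmult_1_r, <- (pow2_abs (INR (g y) - m)).
    apply pow_incr; split; lra.
Qed.

Lemma near_mean_count b h L t :
  (2 <= b)%nat -> h 0%nat = 0%nat -> 0 < t ->
  INR (b ^ L) * (1 - INR L * digit_variance b h / t ^ 2)
  <= INR (nsum (fun y => Nat.b2n (near (happyH b h) (INR L * digit_mean b h) t y)) 0 (b ^ L)).
Proof.
  intros Hb h0 Ht.
  set (good := near (happyH b h) (INR L * digit_mean b h) t).
  set (ng := nsum (fun y => Nat.b2n (good y)) 0 (b ^ L)).
  set (nb := nsum (fun y => Nat.b2n (negb (good y))) 0 (b ^ L)).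
  assert (Hsplit : INR ng + INR nb = INR (b ^ L))
    by (rewrite <- plus_INR; apply f_equal, nsum_near_far).
  pose proof (chebyshev_count (happyH b h) (INR L * digit_mean b h) t (b ^ L) (Rlt_le _ _ Ht))
    as Hcheb.
  rewrite rsum_happyH_dev_sq, <- pow_INR in Hcheb by auto; fold good nb in Hcheb.
  assert (INR nb <= INR L * digit_variance b h * INR (b ^ L) / t ^ 2).
  { apply (Rmult_le_reg_r (t ^ 2)); [nra|].
    replace (INR L * digit_variance b h * INR (b ^ L) / t ^ 2 * t ^ 2)
      with (INR L * digit_variance b h * INR (b ^ L)) by (field; lra).
    lra. }
  replace (INR (b ^ L) * (1 - INR L * digit_variance b h / t ^ 2))
    with (INR (b ^ L) - INR L * digit_variance b h * INR (b ^ L) / t ^ 2) by (field; lra).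
  lra.
Qed.

(** Writing the prefix [repunit b s * b ^ (k - s)] (digit sum [s], exactly [k] digits)
    in front of all [3k]-digit strings [y] yields a [4k]-strict interval on which
    [H] takes the values [s + H y]. *)
Lemma prefix_interval b h C s k :
  (2 <= b)%nat -> h 0%nat = 0%nat -> h 1%nat = 1%nat -> (1 <= s <= k)%nat ->
  exists a c, strict_interval b (4 * k) a c /\ icard a c = (b ^ (3 * k))%nat /\
    (nsum (fun y => indicator (typeC b h C (s + happyH b h y))) 0 (b ^ (3 * k))
     <= typeC_count b h C a c)%nat.
Proof.
  intros Hb h0 h1 Hs.
  set (P := (repunit b s * b ^ (k - s))%nat); set (Y := (b ^ (3 * k))%nat).
  assert (HY : (0 < Y)%nat) by (apply Nat.neq_0_lt_0, Nat.pow_nonzero; lia).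
  assert (HPs : happyH b h P = s).
  { assert (Hpos : (0 < b ^ (k - s))%nat) by (apply Nat.neq_0_lt_0, Nat.pow_nonzero; lia).
    unfold P; rewrite <- (Nat.add_0_r (_ * _)), happyH_concat, happyH_repunit by auto.
    change (happyH b h 0) with 0%nat; lia. }
  assert (HP : (b ^ (k - 1) <= P < b ^ k)%nat).
  { destruct (repunit_bounds b s Hb ltac:(lia)) as [r1 r2]; unfold P.
    replace (b ^ (k - 1))%nat with (b ^ (s - 1) * b ^ (k - s))%nat
      by (rewrite <- Nat.pow_add_r; f_equal; lia).
    replace (b ^ k)%nat with (b ^ s * b ^ (k - s))%nat
      by (rewrite <- Nat.pow_add_r; f_equal; lia).
    assert (b ^ (k - s) <> 0)%nat by (apply Nat.pow_nonzero; lia); split; nia. }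
  assert (HYR : INR Y = INR b ^ (3 * k)) by apply pow_INR.
  assert (Hic : icard (P * Y) (P * Y + Y - 1) = Y) by (unfold icard; lia).
  exists (P * Y)%nat, (P * Y + Y - 1)%nat; split; [|split; auto].
  - split; [|split].
    + replace (4 * k - 1)%nat with ((k - 1) + 3 * k)%nat by lia.
      rewrite Nat.pow_add_r; unfold Y; nia.
    + replace (4 * k)%nat with (k + 3 * k)%nat by lia.
      rewrite Nat.pow_add_r; unfold Y; nia.
    + rewrite Hic, HYR, <- Rpower_pow by (apply lt_0_INR; lia).
      f_equal; rewrite !mult_INR; simpl; field.
  - unfold typeC_count; rewrite nsum_fold, Hic, <- (Nat.add_0_l (P * Y)), nsum_shift.
    apply nsum_le; intros y Hy; apply indicator_mono; intros HT; apply typeC_happyH.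
    unfold Y; rewrite (Nat.add_comm y), happyH_concat, HPs; auto; lia.
Qed.

Lemma exists_nat_ceil x : 0 <= x -> exists k : nat, INR k - 1 <= x < INR k.
Proof.
  intros Hx; destruct (archimed x) as [H1 H2].
  assert (0 <= up x)%Z by (apply le_IZR; simpl; lra).
  exists (Z.to_nat (up x)); rewrite INR_IZR_INZ, Z2Nat.id by auto; lra.
Qed.

Lemma exists_nat_floor x : 0 <= x -> exists k : nat, INR k <= x < INR k + 1.
Proof.
  intros Hx; destruct (exists_nat_ceil x Hx) as [[|k] Hk]; [simpl in Hk; lra|].
  rewrite S_INR in Hk; destruct (Rle_dec (INR (S k)) x) as [H|H];
    [exists (S k) | exists k]; rewrite S_INR in *; lra.
Qed.

Lemma Rpower_mult_INR x y j : 0 < x -> Rpower x (INR j * y) = Rpower x y ^ j.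
Proof.
  intros Hx; rewrite <- Rpower_pow by (unfold Rpower; apply exp_pos).
  rewrite Rpower_mult; f_equal; ring.
Qed.

Lemma Rpower_gt1 x y : 1 < x -> 0 < y -> 1 < Rpower x y.
Proof. intros Hx Hy; rewrite <- (Rpower_O x) at 1 by lra; apply Rpower_lt; lra. Qed.

Lemma sqr_le_4_pow2 n : (n * n <= 4 * 2 ^ n)%nat.
Proof.
  induction n; [simpl; lia|].
  destruct (le_lt_dec n 2) as [Hn|Hn]; [destruct n as [|[|[|]]]; simpl; lia|].
  rewrite Nat.pow_succ_r'; nia.
Qed.

Lemma exp_le_compat x y : x <= y -> exp x <= exp y.
Proof.
  intros [Hlt|<-]; [left; apply exp_increasing; auto | right; auto].
Qed.

(** From [1 - x >= exp (-4x/3)] on [[0, 1/4]] and [1 + e <= exp e]. *)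
Lemma exp_neg_mul_le x e L :
  0 <= x <= 1/4 -> 0 <= e -> 4/3 * x + e <= L -> exp (- L) * (1 + e) <= 1 - x.
Proof.
  intros Hx He HL.
  assert (Hexp : forall u, exp (- u) * (1 + u) <= 1).
  { intros u.
    assert (E : exp (- u) * exp u = 1) by (rewrite <- exp_plus, Rplus_opp_l; apply exp_0).
    rewrite <- E at 2; apply Rmult_le_compat_l; [left; apply exp_pos | apply exp_ineq1_le]. }
  pose proof (Hexp (4/3 * x)); pose proof (Hexp e).
  assert (exp (- L) <= exp (- (4/3 * x)) * exp (- e))
    by (rewrite <- exp_plus; apply exp_le_compat; lra).
  assert (1 <= (1 - x) * (1 + 4/3 * x)) by nra.
  pose proof (exp_pos (- (4/3 * x))); pose proof (exp_pos (- e)); pose proof (exp_pos (- L)).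
  apply Rle_trans with (exp (- (4/3 * x)) * (exp (- e) * (1 + e))); [nra|].
  apply Rle_trans with (exp (- (4/3 * x))); nra.
Qed.

Lemma rsum_geometric_le A N : 1 < A -> rsum (fun j => / A ^ j) 1 N <= 1 / (A - 1).
Proof.
  intros HA.
  assert (Hsum : forall s, rsum (fun j => / A ^ j) s N = (/ A ^ s - / A ^ (s + N)) * A / (A - 1)).
  { induction N; intros s; simpl rsum.
    - rewrite Nat.add_0_r, Rminus_diag; unfold Rdiv; ring.
    - rewrite IHN, <- plus_n_Sm.
      assert (0 < A ^ s) by (apply pow_lt; lra).
      assert (0 < A ^ (s + N)) by (apply pow_lt; lra).
      simpl; field; repeat split; lra. }
  rewrite Hsum.
  assert (0 < / A ^ (1 + N)) by (apply Rinv_0_lt_compat, pow_lt; lra).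
  replace (1 / (A - 1)) with (/ A ^ 1 * A / (A - 1)) by (simpl; field; lra).
  unfold Rdiv; apply Rmult_le_compat_r; [left; apply Rinv_0_lt_compat; lra|].
  apply Rmult_le_compat_r; lra.
Qed.

Lemma div_mul_le_of_chain L N T E q d :
  E * N <= L * q -> q * T <= N * d -> 0 < L -> 0 < N -> 0 <= T -> T / L * E <= d.
Proof.
  intros H1 H2 HL HN HT.
  apply (Rmult_le_reg_r (N * L)); [nra|].
  replace (T / L * E * (N * L)) with (E * N * T) by (field; lra).
  apply Rle_trans with (L * (q * T)); [rewrite <- Rmult_assoc; apply Rmult_le_compat_r; auto|].
  replace (d * (N * L)) with (L * (N * d)) by ring; apply Rmult_le_compat_l; lra.
Qed.

Lemma le_of_sqr_mul_le x y m : 0 < m -> 0 <= y -> x * x * m <= y * y * m -> x <= y.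
Proof. intros Hm Hy H; apply Rmult_le_reg_r in H; [nra | auto]. Qed.

Lemma threshold_shift_poly_le mu Rb : 0 < mu -> 1 <= mu * Rb -> 2 <= Rb ->
  15/4 * (4 * mu + 1) * (6 * mu + 1) ^ 2 <= 4 * mu * Rb * (36 * mu + 2) * (3 * mu + 1).
Proof.
  intros Hm H1 H2.
  assert (HX : 0 <= (36 * mu + 2) * (3 * mu + 1)) by nra.
  set (X := (36 * mu + 2) * (3 * mu + 1)) in *.
  replace (4 * mu * Rb * (36 * mu + 2) * (3 * mu + 1)) with (4 * (mu * Rb) * X)
    by (unfold X; ring).
  destruct (Rle_dec mu (1/2)).
  - apply Rle_trans with (4 * X); unfold X; nra.
  - apply Rle_trans with (8 * mu * X).
    + assert (mu * mu >= mu / 2) by nra; assert (mu * mu * mu >= mu * mu / 2) by nra.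
      unfold X; nra.
    + assert (0 <= mu * X) by nra; nra.
Qed.

(** * Choice of the parameters of one step *)

(** Here [Q = b ^ (n/8)], [P = b ^ (n-1)], [mu = r ^ 2] and [sigma = s]; the interval
    [[a, c]] has length [Q ^ 6], and [B1], [B3] are the bounds (B1), (B3) at [n]. *)
Section StepParameters.

Variables (Rb Q P mu r s w a c : R).
Hypotheses (HRb : 2 <= Rb) (HQ : 1 < Q) (HPQ : P * Rb = Q ^ 8)
  (Hr : 0 < r) (Hmu : mu = r * r) (Hs : 0 < s) (Hw : w * w = 2) (Hw0 : 0 < w)
  (Hmub : 1 <= mu * Rb)
  (B1 : 4 * (1 + 3 * mu) + 4 * w * s * Q ^ 5 <= P)
  (B3 : 4 * mu * (3 * mu + 1 + Q ^ 6) + 8 * r * s * Q ^ 5 <= P)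
  (Ha : P <= a) (Hc : c = a + Q ^ 6 - 1) (Hc8 : c + 1 <= Q ^ 8).

Let mu_pos : 0 < mu. Proof. nra. Qed.
Let Q5_pos : 0 < Q ^ 5. Proof. apply pow_lt; lra. Qed.
Let Q6_ge1 : 1 <= Q ^ 6. Proof. apply pow_R1_Rle; lra. Qed.
Let P_pos : 0 < P. Proof. nra. Qed.
Let P_le_c : P <= c. Proof. lra. Qed.
Let mu_Q6_le_P : 4 * mu * Q ^ 6 <= P.
Proof.
  assert (0 <= 4 * mu * (3 * mu + 1)) by (pose proof mu_pos; nra).
  assert (0 <= r * s * Q ^ 5) by (pose proof Q5_pos; repeat apply Rmult_le_pos; lra).
  lra.
Qed.

Local Ltac basic_facts :=
  pose proof mu_pos; pose proof Q5_pos; pose proof Q6_ge1; pose proof P_pos; pose proof P_le_c;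
  pose proof mu_Q6_le_P.

Lemma Q_sq_bounds : 4 <= Q * Q /\ 3 * mu + 1 <= 5/8 * (Q * Q).
Proof.
  basic_facts.
  assert (HQ6 : 4 * mu * Q ^ 6 * Rb <= Q ^ 6 * (Q * Q)).
  { replace (Q ^ 6 * (Q * Q)) with (P * Rb) by (rewrite HPQ; ring).
    apply Rmult_le_compat_r; lra. }
  assert (H' : 4 * (mu * Rb) <= Q * Q)
    by (apply (Rmult_le_reg_l (Q ^ 6)); lra).
  split; nra.
Qed.

Section Threshold.

(** [t] is the least threshold for which Chebyshev leaves at most a fraction [1 / Q ^ 2]
    of [3k]-digit strings out, given [(3 mu + 1) k <= 5 c / 4]. *)
Variable t : R.
Hypothesis (Htt : t * t * (3 * mu + 1) = 15/4 * c * (s * s) * (Q * Q)).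

Lemma threshold_mul_r_le : t * r <= 2 * s * Q ^ 5.
Proof.
  basic_facts.
  apply (le_of_sqr_mul_le _ _ (3 * mu + 1)); [lra | nra|].
  replace (t * r * (t * r) * (3 * mu + 1)) with (15/4 * c * mu * ((s * s) * (Q * Q)))
    by (symmetry; transitivity (mu * (t * t * (3 * mu + 1))); [rewrite Hmu | rewrite Htt]; ring).
  replace (2 * s * Q ^ 5 * (2 * s * Q ^ 5) * (3 * mu + 1))
    with (4 * Q ^ 8 * (3 * mu + 1) * ((s * s) * (Q * Q))) by ring.
  apply Rmult_le_compat_r; [nra|].
  assert (0 <= c) by lra; nra.
Qed.

(** (B1) gives [w s Q ^ 5 <= P / 4 - 3 mu - 1], and [t] is at most [c / P] times that. *)
Lemma threshold_le_quarter : t + 3 * mu + 1 <= c / 4.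
Proof.
  basic_facts.
  assert (HtP : t * P <= c * (w * s * Q ^ 5)).
  { apply (le_of_sqr_mul_le _ _ (3 * mu + 1)); [lra | repeat apply Rmult_le_pos; lra |].
    set (K := c * (s * s) * (Q * Q)).
    assert (0 <= K) by (unfold K; repeat apply Rmult_le_pos; nra).
    replace (t * P * (t * P) * (3 * mu + 1)) with (15/4 * P * P * K)
      by (symmetry; transitivity (P * P * (t * t * (3 * mu + 1)));
          [ring | rewrite Htt; unfold K; ring]).
    replace (c * (w * s * Q ^ 5) * (c * (w * s * Q ^ 5)) * (3 * mu + 1))
      with (2 * c * Rb * (3 * mu + 1) * P * K)
      by (symmetry; transitivity ((w * w) * c * c * (s * s) * (Q ^ 5 * Q ^ 5) * (3 * mu + 1));
          [ring | replace (Q ^ 5 * Q ^ 5) with (P * Rb * (Q * Q)) by (rewrite HPQ; ring);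
                  rewrite Hw; unfold K; ring]).
    apply Rmult_le_compat_r; [auto|]; apply Rmult_le_compat_r; [lra|]; nra. }
  apply (Rmult_le_reg_r P); [auto|].
  assert (c * (w * s * Q ^ 5) <= c * (P / 4 - 1 - 3 * mu)) by (apply Rmult_le_compat_l; lra).
  assert ((3 * mu + 1) * P <= (3 * mu + 1) * c) by (apply Rmult_le_compat_l; lra).
  nra.
Qed.

(** (B1) and (B3), weighted [1/4] and [3/4], give
    [3 mu Q^6 + (6 r + w) s Q^5 + (3 mu + 1)^2 <= P]. *)
Lemma threshold_shift_le : 3 * mu * Q ^ 6 + (6 * mu + 1) * t + (3 * mu + 1) ^ 2 <= a.
Proof.
  basic_facts.
  assert (Hca : 4 * mu * c <= (4 * mu + 1) * a) by nra.
  assert (HtP : (6 * mu + 1) * t * P <= a * ((6 * r + w) * s * Q ^ 5)).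
  { apply (le_of_sqr_mul_le _ _ (4 * mu * (3 * mu + 1))); [nra | repeat apply Rmult_le_pos; lra |].
    set (K := (s * s) * (Q * Q)).
    assert (0 < K) by (unfold K; nra).
    replace ((6 * mu + 1) * t * P * ((6 * mu + 1) * t * P) * (4 * mu * (3 * mu + 1)))
      with (15/4 * (6 * mu + 1) ^ 2 * (4 * mu * c) * P * P * K)
      by (symmetry; transitivity ((6 * mu + 1) ^ 2 * P * P * (4 * mu) * (t * t * (3 * mu + 1)));
          [ring | rewrite Htt; unfold K; ring]).
    replace (a * ((6 * r + w) * s * Q ^ 5) * (a * ((6 * r + w) * s * Q ^ 5))
               * (4 * mu * (3 * mu + 1)))
      with (a * a * ((6 * r + w) * (6 * r + w)) * (3 * mu + 1) * 4 * mu * Rb * P * K)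
      by (symmetry; transitivity (a * a * ((6 * r + w) * (6 * r + w)) * (s * s) * (Q ^ 5 * Q ^ 5)
                                  * (4 * mu * (3 * mu + 1)));
          [ring | replace (Q ^ 5 * Q ^ 5) with (P * Rb * (Q * Q)) by (rewrite HPQ; ring);
                  unfold K; ring]).
    apply Rmult_le_compat_r; [lra|]; apply Rmult_le_compat_r; [lra|].
    pose proof (threshold_shift_poly_le mu Rb mu_pos Hmub HRb).
    assert (Hsq : 36 * mu + 2 <= (6 * r + w) * (6 * r + w)) by (rewrite Hmu; nra).
    apply Rle_trans with (15/4 * (6 * mu + 1) ^ 2 * ((4 * mu + 1) * a) * a).
    { assert (0 <= 15/4 * (6 * mu + 1) ^ 2) by nra.
      apply Rmult_le_compat; [apply Rmult_le_pos; nra | lra | apply Rmult_le_compat_l; lra | lra]. }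
    apply Rle_trans with (a * a * ((36 * mu + 2) * (3 * mu + 1) * 4 * mu * Rb)); [nra|].
    replace (a * a * ((6 * r + w) * (6 * r + w)) * (3 * mu + 1) * 4 * mu * Rb)
      with (a * a * ((3 * mu + 1) * 4 * mu * Rb) * ((6 * r + w) * (6 * r + w))) by ring.
    replace (a * a * ((36 * mu + 2) * (3 * mu + 1) * 4 * mu * Rb))
      with (a * a * ((3 * mu + 1) * 4 * mu * Rb) * (36 * mu + 2)) by ring.
    assert (0 <= a * a) by nra; assert (0 <= (3 * mu + 1) * 4 * mu * Rb) by nra.
    apply Rmult_le_compat_l; [apply Rmult_le_pos|]; lra. }
  apply (Rmult_le_reg_r P); [auto|].
  assert (8 * r * s * Q ^ 5 = 8 * (r * s * Q ^ 5)) by ring.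
  assert (a * (3 * mu * Q ^ 6 + (6 * r + w) * s * Q ^ 5 + (3 * mu + 1) ^ 2) <= a * P)
    by (apply Rmult_le_compat_l; nra).
  assert (3 * mu * Q ^ 6 * P <= 3 * mu * Q ^ 6 * a) by (apply Rmult_le_compat_l; nra).
  nra.
Qed.

End Threshold.

Lemma exp_step_loss_le t x y :
  0 < t -> t * r <= 2 * s * Q ^ 5 -> y * (Q * Q) <= t * t -> x <= Q ^ 6 + 2 * t + 3 * mu + 1 ->
  exp (- (2 / Q ^ 2 + 4 * s / (r * Q))) * x <= Q ^ 6 * (1 - y / t ^ 2).
Proof.
  intros Ht Htr Hy Hx; basic_facts; destruct Q_sq_bounds as [HQ2 Hm].
  set (u := 1 / (Q * Q)); set (e := (2 * t + 3 * mu + 1) / Q ^ 6).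
  assert (Hu : 0 <= u <= 1/4).
  { unfold u; split; [left; apply Rdiv_lt_0_compat; lra|].
    unfold Rdiv; rewrite !Rmult_1_l; apply Rinv_le_contravar; lra. }
  assert (He : 0 <= e) by (unfold e; apply Rmult_le_pos; [lra | left; apply Rinv_0_lt_compat; lra]).
  assert (HL : 4/3 * u + e <= 2 / Q ^ 2 + 4 * s / (r * Q)).
  { assert ((3 * mu + 1) / Q ^ 6 <= 2/3 * u).
    { unfold u; apply (Rmult_le_reg_r (Q ^ 6)); [lra|].
      replace ((3 * mu + 1) / Q ^ 6 * Q ^ 6) with (3 * mu + 1) by (field; lra).
      replace (2/3 * (1 / (Q * Q)) * Q ^ 6) with (2/3 * (Q * Q) * (Q * Q)) by (field; lra).
      nra. }
    assert (2 * t / Q ^ 6 <= 4 * s / (r * Q)).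
    { apply (Rmult_le_reg_r (Q ^ 6 * r)); [nra|].
      replace (2 * t / Q ^ 6 * (Q ^ 6 * r)) with (2 * (t * r)) by (field; lra).
      replace (4 * s / (r * Q) * (Q ^ 6 * r)) with (2 * (2 * s * Q ^ 5))
        by (field; repeat split; lra); lra. }
    unfold e, u in *; replace ((2 * t + 3 * mu + 1) / Q ^ 6)
      with (2 * t / Q ^ 6 + (3 * mu + 1) / Q ^ 6) by (field; lra).
    replace (2 / Q ^ 2) with (2 * (1 / (Q * Q))) by (field; lra); lra. }
  assert (y / t ^ 2 <= u).
  { unfold u; apply (Rmult_le_reg_r (t ^ 2 * (Q * Q))); [nra|].
    replace (y / t ^ 2 * (t ^ 2 * (Q * Q))) with (y * (Q * Q)) by (field; lra).
    replace (1 / (Q * Q) * (t ^ 2 * (Q * Q))) with (t * t) by (field; lra); lra. }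
  assert (x <= Q ^ 6 * (1 + e)) by (unfold e; field_simplify; lra).
  pose proof (exp_neg_mul_le u e _ Hu He HL).
  pose proof (exp_pos (- (2 / Q ^ 2 + 4 * s / (r * Q)))).
  apply Rle_trans with (exp (- (2 / Q ^ 2 + 4 * s / (r * Q))) * (Q ^ 6 * (1 + e)));
    [apply Rmult_le_compat_l; lra | nra].
Qed.

Lemma step_parameters :
  exists (t : R) (k M : nat), 0 < t /\
    INR M <= 3 * mu * INR k + t < INR M + 1 /\
    INR M + 1 <= a /\ a < INR k + INR M + 1 /\
    c + t <= (3 * mu + 1) * INR k /\ Q ^ 4 <= INR k /\
    exp (- (2 / Q ^ 2 + 4 * s / (r * Q))) * (INR k + 1 + INR M - a)
      <= Q ^ 6 * (1 - 3 * INR k * (s * s) / t ^ 2).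
Proof.
  basic_facts; destruct Q_sq_bounds as [HQ2 Hm].
  set (t := sqrt (15/4 * c * (s * s) * (Q * Q) / (3 * mu + 1))).
  assert (Htt : t * t * (3 * mu + 1) = 15/4 * c * (s * s) * (Q * Q)).
  { unfold t; rewrite sqrt_sqrt; [field; lra|].
    apply Rmult_le_pos; [repeat apply Rmult_le_pos; nra | left; apply Rinv_0_lt_compat; lra]. }
  assert (Ht : 0 < t).
  { apply sqrt_lt_R0, Rmult_lt_0_compat; [repeat apply Rmult_lt_0_compat; nra|].
    apply Rinv_0_lt_compat; lra. }
  pose proof (threshold_le_quarter t Htt).
  pose proof (threshold_shift_le t Htt).
  pose proof (threshold_mul_r_le t Htt).
  destruct (exists_nat_ceil ((c + t) / (3 * mu + 1))) as [k Hk].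
  { apply Rmult_le_pos; [lra | left; apply Rinv_0_lt_compat; lra]. }
  assert (Hkc : c + t <= (3 * mu + 1) * INR k <= c + t + 3 * mu + 1).
  { replace (c + t) with ((3 * mu + 1) * ((c + t) / (3 * mu + 1))) by (field; lra); nra. }
  assert (Hk0 : 0 <= INR k) by apply pos_INR.
  destruct (exists_nat_floor (3 * mu * INR k + t)) as [M HM]; [nra|].
  assert (Hfeas : 3 * mu * INR k + t + 1 <= a).
  { assert (3 * mu * ((3 * mu + 1) * INR k) <= 3 * mu * (c + t + 3 * mu + 1))
      by (apply Rmult_le_compat_l; lra).
    apply (Rmult_le_reg_l (3 * mu + 1)); [lra|]; rewrite Hc in *; lra. }
  assert (Htk : 3 * INR k * (s * s) * (Q * Q) <= t * t).
  { apply (Rmult_le_reg_r (3 * mu + 1)); [lra|]; rewrite Htt.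
    assert ((3 * mu + 1) * INR k * (3 * (s * s) * (Q * Q)) <= 5/4 * c * (3 * (s * s) * (Q * Q)))
      by (apply Rmult_le_compat_r; [nra | lra]).
    lra. }
  exists t, k, M; repeat split; try lra.
  - apply (Rmult_le_reg_r (Q * Q)); [lra|].
    assert ((3 * mu + 1) * INR k <= 5/8 * (Q * Q) * INR k) by (apply Rmult_le_compat_r; lra).
    replace (Q ^ 4 * (Q * Q)) with (Q ^ 6) by ring; lra.
  - apply exp_step_loss_le; auto; rewrite Hc in Hkc; lra.
Qed.

End StepParameters.

(** * One step: from an [n]-strict interval to a [4k]-strict one *)

(** The [3k]-digit strings [y] whose digit sum lies within [t] of its mean [3 k mu]
    are all but a fraction [3 k sigma^2 / t^2] of them (Chebyshev), and for each
    of them the window [s + H y], [a - M <= s <= k], covers [[a, c]]. *)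
Lemma density_transfer b h C a c k M t :
  (2 <= b)%nat -> h 0%nat = 0%nat -> h 1%nat = 1%nat -> 0 < t ->
  (M < a)%nat -> (a <= c)%nat -> (a <= k + M)%nat ->
  INR M <= 3 * digit_mean b h * INR k + t < INR M + 1 ->
  INR c + t <= (3 * digit_mean b h + 1) * INR k ->
  exists a' c', strict_interval b (4 * k) a' c' /\
    (1 - 3 * INR k * digit_variance b h / t ^ 2) * INR (typeC_count b h C a c)
      <= (INR k + 1 + INR M - INR a) * typeC_density b h C a' c'.
Proof.
  intros Hb h0 h1 Ht HMa Hac HakM HM Hkc.
  set (G := happyH b h); set (Y := (b ^ (3 * k))%nat).
  set (m := INR (3 * k) * digit_mean b h); set (good := near G m t).
  assert (Hm : m = 3 * digit_mean b h * INR k) by (unfold m; rewrite mult_INR; simpl; ring).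
  destruct (shift_average (typeC b h C) G good Y a c (a - M) k) as [s0 [Hs0 Hcnt]];
    [lia | lia | |].
  { intros y _ Hg; unfold good, near in Hg.
    destruct (Rle_dec (Rabs (INR (G y) - m)) t) as [Hy|]; [|discriminate].
    assert (- t <= INR (G y) - m <= t)
      by (unfold Rabs in Hy; destruct (Rcase_abs (INR (G y) - m)); lra).
    assert (G y <= M)%nat by (apply Nat.lt_succ_r, INR_lt; rewrite S_INR; lra).
    split; [lia|]. apply INR_le; rewrite plus_INR; lra. }
  destruct (prefix_interval b h C s0 k Hb h0 h1 ltac:(lia)) as [a' [c' [Hstrict [Hic Hpre]]]].
  exists a', c'; split; [auto|].
  set (ng := nsum (fun y => Nat.b2n (good y)) 0 Y) in *.
  set (T := typeC_count b h C a c).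
  set (cnt := nsum (fun y => indicator (typeC b h C (s0 + G y))) 0 Y) in *.
  assert (HYpos : 0 < INR Y) by (apply lt_0_INR, Nat.neq_0_lt_0, Nat.pow_nonzero; lia).
  pose proof (near_mean_count b h (3 * k) t Hb h0 Ht) as Hng.
  fold G Y m good ng in Hng; rewrite mult_INR in Hng; simpl INR in Hng.
  assert (HT : INR ng * INR T <= INR (S k - (a - M)) * INR cnt).
  { rewrite <- !mult_INR; apply le_INR.
    unfold T, typeC_count; rewrite nsum_fold; auto. }
  replace (INR (S k - (a - M))) with (INR k + 1 + INR M - INR a) in HT
    by (rewrite !minus_INR, S_INR by lia; ring).
  unfold typeC_density; rewrite Hic; fold Y.
  apply le_INR in Hpre; fold cnt in Hpre.
  apply (Rmult_le_reg_r (INR Y)); [auto|].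
  replace ((INR k + 1 + INR M - INR a) * (INR (typeC_count b h C a' c') / INR Y) * INR Y)
    with ((INR k + 1 + INR M - INR a) * INR (typeC_count b h C a' c')) by (field; lra).
  assert (0 <= INR T) by apply pos_INR.
  assert (0 <= INR k + 1 + INR M - INR a).
  { assert (INR a <= INR k + INR M) by (rewrite <- plus_INR; apply le_INR; auto); lra. }
  apply Rle_trans with (INR ng * INR T); [nra|].
  apply Rle_trans with ((INR k + 1 + INR M - INR a) * INR cnt); [auto|].
  apply Rmult_le_compat_l; auto.
Qed.

(** The bounds (B1) and (B3) at [n] are [step_bounds] at [eighth_power b n]. *)
Definition eighth_power (b n : nat) : R := Rpower (INR b) (INR n / 8).

Definition step_bounds (b : nat) (h : nat -> nat) (Q : R) : Prop :=
  4 * (1 + 3 * digit_mean b h) + 4 * sqrt 2 * digit_sd b h * Q ^ 5 <= Q ^ 8 / INR b /\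
  4 * digit_mean b h * (3 * digit_mean b h + 1 + Q ^ 6)
    + 8 * sqrt (digit_mean b h) * digit_sd b h * Q ^ 5 <= Q ^ 8 / INR b.

Definition step_loss (b : nat) (h : nat -> nat) (Q : R) : R :=
  2 / Q ^ 2 + 4 * digit_sd b h / (sqrt (digit_mean b h) * Q).

Lemma eighth_power_gt1 b n : (2 <= b)%nat -> (1 <= n)%nat -> 1 < eighth_power b n.
Proof.
  intros Hb Hn; apply Rpower_gt1.
  - replace 1 with (INR 1) by reflexivity; apply lt_INR; lia.
  - apply Rdiv_lt_0_compat; [apply lt_0_INR; lia | lra].
Qed.

Lemma Rpower_eighth_power b n j : (1 <= b)%nat ->
  Rpower (INR b) (INR j * INR n / 8) = eighth_power b n ^ j.
Proof.
  intros Hb; unfold eighth_power; rewrite <- Rpower_mult_INR by (apply lt_0_INR; lia).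
  f_equal; field.
Qed.

Lemma pow_eighth_power b n : (1 <= b)%nat -> INR b ^ n = eighth_power b n ^ 8.
Proof.
  intros Hb; rewrite <- (Rpower_eighth_power b n 8) by auto.
  rewrite <- Rpower_pow by (apply lt_0_INR; lia); f_equal; simpl; field.
Qed.

Lemma eighth_power_le b n n' :
  (2 <= b)%nat -> (n <= n')%nat -> eighth_power b n <= eighth_power b n'.
Proof.
  intros Hb Hn; unfold eighth_power; apply Rle_Rpower.
  - replace 1 with (INR 1) by reflexivity; apply le_INR; lia.
  - apply le_INR in Hn; lra.
Qed.

Lemma eighth_power_mul b n j : (1 <= b)%nat -> eighth_power b (j * n) = eighth_power b n ^ j.
Proof.
  intros Hb; rewrite <- Rpower_eighth_power by auto; unfold eighth_power.
  rewrite mult_INR; f_equal; field.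
Qed.

Lemma strict_interval_bounds b n a c :
  (2 <= b)%nat -> (1 <= n)%nat -> strict_interval b n a c ->
  INR (icard a c) = eighth_power b n ^ 6 /\ eighth_power b n ^ 8 / INR b <= INR a /\
  INR c = INR a + eighth_power b n ^ 6 - 1 /\ INR c + 1 <= eighth_power b n ^ 8.
Proof.
  intros Hb Hn [Ha [Hc HL]].
  assert (HRb : 0 < INR b) by (apply lt_0_INR; lia).
  assert (HL6 : INR (icard a c) = eighth_power b n ^ 6).
  { rewrite HL, <- (Rpower_eighth_power b n 6) by lia; f_equal; simpl; field. }
  assert (HQ8 : eighth_power b n ^ 8 = INR (b ^ n))
    by (rewrite pow_INR, pow_eighth_power by lia; auto).
  pose proof (eighth_power_gt1 b n Hb Hn) as HQ.
  set (Q := eighth_power b n) in *.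
  assert (Hpos : (0 < b ^ n)%nat) by (apply Nat.neq_0_lt_0, Nat.pow_nonzero; lia).
  assert (Hac : (a <= c)%nat).
  { destruct (le_lt_dec a c) as [|Hca]; auto.
    unfold icard in HL6; replace (S c - a)%nat with 0%nat in HL6 by lia.
    pose proof (pow_lt Q 6 ltac:(lra)).
    simpl in HL6; lra. }
  assert (HcR : INR c = INR a + Q ^ 6 - 1)
    by (unfold icard in HL6; rewrite minus_INR, S_INR in HL6 by lia; lra).
  repeat split; auto.
  - rewrite HQ8, <- (Nat.sub_add 1 n Hn), Nat.pow_add_r, mult_INR; simpl; rewrite Nat.mul_1_r.
    replace (INR (b ^ (n - 1)) * INR b / INR b) with (INR (b ^ (n - 1))) by (field; lra).
    apply le_INR; auto.
  - rewrite HQ8, <- S_INR; apply le_INR; lia.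
Qed.

(** From [n ^ 2 <= 4 * 2 ^ n <= 4 * b ^ n]. *)
Lemma INR_le_twice_eighth_power_pow4 b n : (2 <= b)%nat -> INR n <= 2 * eighth_power b n ^ 4.
Proof.
  intros Hb.
  assert (HRb : 2 <= INR b) by (replace 2 with (INR 2) by (simpl; lra); apply le_INR; auto).
  assert (Hn2 : INR n * INR n <= 4 * eighth_power b n ^ 8).
  { rewrite <- pow_eighth_power by lia.
    pose proof (le_INR _ _ (sqr_le_4_pow2 n)) as Hp.
    rewrite !mult_INR, pow_INR in Hp.
    replace (INR 4) with 4 in Hp by (simpl; lra); replace (INR 2) with 2 in Hp by (simpl; lra).
    assert (2 ^ n <= INR b ^ n) by (apply pow_incr; lra); lra. }
  pose proof (pow_lt (eighth_power b n) 4 ltac:(unfold eighth_power, Rpower; apply exp_pos)).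
  apply (le_of_sqr_mul_le _ _ 1); [lra | lra |].
  replace (2 * eighth_power b n ^ 4 * (2 * eighth_power b n ^ 4) * 1)
    with (4 * eighth_power b n ^ 8) by ring; lra.
Qed.

Lemma density_step b h C n a c :
  (2 <= b)%nat -> h 0%nat = 0%nat -> h 1%nat = 1%nat -> (1 <= n)%nat ->
  step_bounds b h (eighth_power b n) -> strict_interval b n a c ->
  exists n' a' c', (2 * n <= n')%nat /\ strict_interval b n' a' c' /\
    typeC_density b h C a' c' >=
      typeC_density b h C a c * exp (- step_loss b h (eighth_power b n)).
Proof.
  intros Hb h0 h1 Hn [B1 B3] Hstrict.
  destruct (strict_interval_bounds b n a c Hb Hn Hstrict) as [HL [Ha [Hc Hc8]]].
  set (Q := eighth_power b n) in *; set (mu := digit_mean b h) in *.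
  set (sigma := digit_sd b h) in *.
  assert (HQ : 1 < Q) by (apply eighth_power_gt1; auto).
  assert (HRb : 2 <= INR b) by (replace 2 with (INR 2) by (simpl; lra); apply le_INR; auto).
  assert (Hmu : 0 < mu) by (apply digit_mean_pos; auto).
  assert (Hvar : digit_variance b h = sigma * sigma)
    by (unfold sigma, digit_sd; rewrite sqrt_sqrt; auto; apply Rlt_le, digit_variance_pos; auto).
  assert (Hsigma : 0 < sigma) by (apply sqrt_lt_R0, digit_variance_pos; auto).
  destruct (step_parameters (INR b) Q (Q ^ 8 / INR b) mu (sqrt mu) sigma (sqrt 2) (INR a) (INR c))
    as (t & k & M & Ht & HM & HMa & HakM & Hkc & Hk4 & Hexp);
    auto; try (apply sqrt_lt_R0; lra).
  { field; lra. }
  { rewrite sqrt_sqrt; lra. }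
  { apply sqrt_sqrt; lra. }
  { apply digit_mean_mul_ge1; auto. }
  assert (HMa' : (M < a)%nat) by (apply INR_lt; lra).
  assert (HakM' : (a <= k + M)%nat) by (apply Nat.lt_succ_r, INR_lt; rewrite S_INR, plus_INR; lra).
  assert (Hac : (a <= c)%nat) by (apply INR_le; pose proof (pow_R1_Rle Q 6); lra).
  destruct (density_transfer b h C a c k M t Hb h0 h1 Ht HMa' Hac HakM' HM Hkc)
    as (a' & c' & Hstrict' & Hd).
  exists (4 * k)%nat, a', c'; split; [|split; [exact Hstrict'|]].
  - pose proof (INR_le_twice_eighth_power_pow4 b n Hb) as Hn2; fold Q in Hn2.
    apply INR_le; rewrite !mult_INR; simpl; lra.
  - rewrite Hvar in Hd; unfold typeC_density at 2; rewrite HL.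
    apply Rle_ge, (div_mul_le_of_chain _ (INR k + 1 + INR M - INR a) _ _ _ _ Hexp Hd).
    + apply pow_lt; lra.
    + assert (INR a <= INR k + INR M) by (rewrite <- plus_INR; apply le_INR; auto); lra.
    + apply pos_INR.
Qed.

(** * Iteration *)

Lemma poly_bound_mono A B C E Q Q' :
  0 <= A -> 0 <= B -> 0 <= C -> 0 < Q <= Q' ->
  A + B * Q ^ 5 + C * Q ^ 6 <= E * Q ^ 8 -> A + B * Q' ^ 5 + C * Q' ^ 6 <= E * Q' ^ 8.
Proof.
  intros HA HB HC HQ H.
  set (D := Q' / Q).
  assert (HD : 1 <= D) by (unfold D; apply (Rmult_le_reg_r Q); [lra|]; field_simplify; lra).
  replace Q' with (Q * D) by (unfold D; field; lra).
  assert (D ^ 5 <= D ^ 8) by (apply Rle_pow; [auto | lia]).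
  assert (D ^ 6 <= D ^ 8) by (apply Rle_pow; [auto | lia]).
  assert (1 <= D ^ 8) by (apply pow_R1_Rle; auto).
  assert (0 <= B * Q ^ 5) by (apply Rmult_le_pos; [auto | apply pow_le; lra]).
  assert (0 <= C * Q ^ 6) by (apply Rmult_le_pos; [auto | apply pow_le; lra]).
  rewrite !Rpow_mult_distr.
  apply Rle_trans with ((A + B * Q ^ 5 + C * Q ^ 6) * D ^ 8); [nra|].
  assert (0 < D ^ 8) by lra; nra.
Qed.

Lemma step_bounds_mono b h Q Q' :
  (2 <= b)%nat -> h 1%nat = 1%nat -> 0 < Q <= Q' -> step_bounds b h Q -> step_bounds b h Q'.
Proof.
  intros Hb h1 HQ [B1 B3].
  pose proof (digit_mean_pos b h Hb h1) as Hmu.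
  assert (Hs : 0 <= digit_sd b h) by apply sqrt_pos.
  assert (Hr : 0 <= sqrt (digit_mean b h)) by apply sqrt_pos.
  assert (H2 : 0 <= sqrt 2) by apply sqrt_pos.
  unfold step_bounds, Rdiv in *; split.
  - pose proof (poly_bound_mono (4 * (1 + 3 * digit_mean b h)) (4 * sqrt 2 * digit_sd b h) 0
                  (/ INR b) Q Q' ltac:(lra) ltac:(nra) ltac:(lra) HQ ltac:(lra)); lra.
  - pose proof (poly_bound_mono (4 * digit_mean b h * (3 * digit_mean b h + 1))
                  (8 * sqrt (digit_mean b h) * digit_sd b h) (4 * digit_mean b h)
                  (/ INR b) Q Q' ltac:(nra) ltac:(nra) ltac:(lra) HQ ltac:(lra)); lra.
Qed.

Lemma step_loss_antitone b h Q Q' :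
  (2 <= b)%nat -> h 1%nat = 1%nat -> 0 < Q <= Q' -> step_loss b h Q' <= step_loss b h Q.
Proof.
  intros Hb h1 HQ; unfold step_loss.
  pose proof (digit_mean_pos b h Hb h1) as Hmu.
  assert (Hr : 0 < sqrt (digit_mean b h)) by (apply sqrt_lt_R0; auto).
  assert (Hs : 0 <= digit_sd b h) by apply sqrt_pos.
  apply Rplus_le_compat; unfold Rdiv; apply Rmult_le_compat_l; try lra;
    apply Rinv_le_contravar; nra.
Qed.

Lemma density_iterate b h C n1 a1 c1 :
  (2 <= b)%nat -> h 0%nat = 0%nat -> h 1%nat = 1%nat -> (1 <= n1)%nat ->
  step_bounds b h (eighth_power b n1) -> strict_interval b n1 a1 c1 ->
  forall i, exists n a c, ((i + 1) * n1 <= n)%nat /\ step_bounds b h (eighth_power b n) /\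
    strict_interval b n a c /\
    typeC_density b h C a c >= typeC_density b h C a1 c1
      * exp (- rsum (fun j => step_loss b h (eighth_power b n1 ^ j)) 1 i).
Proof.
  intros Hb h0 h1 Hn1 HB HS; induction i as [|i IH].
  - exists n1, a1, c1; split; [lia | split; [auto | split; [auto|]]].
    simpl rsum; rewrite Ropp_0, exp_0; lra.
  - destruct IH as (n & a & c & Hn & HBn & HSn & Hd).
    destruct (density_step b h C n a c Hb h0 h1 ltac:(nia) HBn HSn)
      as (n' & a' & c' & Hn' & HS' & Hd').
    pose proof (eighth_power_gt1 b n Hb ltac:(nia)).
    exists n', a', c'; split; [nia|]; split.
    { apply (step_bounds_mono b h (eighth_power b n)); auto.
      split; [lra | apply eighth_power_le; lia]. }
    split; [auto|].
    pose proof (eighth_power_gt1 b n1 Hb Hn1).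
    set (Q1 := eighth_power b n1) in *.
    assert (Hloss : step_loss b h (eighth_power b n) <= step_loss b h (Q1 ^ (i + 1))).
    { apply step_loss_antitone; auto; split.
      - apply pow_lt; lra.
      - unfold Q1; rewrite <- eighth_power_mul by lia; apply eighth_power_le; lia. }
    pose proof (typeC_density_nonneg b h C a1 c1).
    replace (S i) with (i + 1)%nat by lia; rewrite rsum_cat; cbn [rsum].
    replace (1 + i)%nat with (i + 1)%nat by lia.
    apply Rle_ge; apply Rge_le in Hd, Hd'.
    apply Rle_trans with (typeC_density b h C a c * exp (- step_loss b h (eighth_power b n)));
      [|auto].
    rewrite Rplus_0_r, Ropp_plus_distr, exp_plus, <- Rmult_assoc.
    apply Rmult_le_compat; auto.
    + apply Rmult_le_pos; [auto | left; apply exp_pos].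
    + left; apply exp_pos.
    + apply exp_le_compat; lra.
Qed.

Lemma rsum_step_loss_le b h Q N :
  (2 <= b)%nat -> h 1%nat = 1%nat -> 1 < Q ->
  rsum (fun j => step_loss b h (Q ^ j)) 1 N
    <= 2 / (Q ^ 2 - 1) + 4 * digit_sd b h / (sqrt (digit_mean b h) * (Q - 1)).
Proof.
  intros Hb h1 HQ.
  assert (Hr : 0 < sqrt (digit_mean b h)) by (apply sqrt_lt_R0, digit_mean_pos; auto).
  assert (Hs : 0 <= digit_sd b h) by apply sqrt_pos.
  assert (HQ2 : 1 < Q ^ 2) by (simpl; nra).
  replace (rsum (fun j => step_loss b h (Q ^ j)) 1 N)
    with (2 * rsum (fun j => / (Q ^ 2) ^ j) 1 N
          + 4 * digit_sd b h / sqrt (digit_mean b h) * rsum (fun j => / Q ^ j) 1 N).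
  2:{ rewrite <- !rsum_mul_l, <- rsum_add; apply rsum_ext; intros j _; unfold step_loss.
      rewrite <- pow_mult, Nat.mul_comm, pow_mult.
      assert (0 < Q ^ j) by (apply pow_lt; lra).
      field; repeat split; nra. }
  pose proof (rsum_geometric_le _ N HQ2); pose proof (rsum_geometric_le _ N HQ).
  replace (2 / (Q ^ 2 - 1)) with (2 * (1 / (Q ^ 2 - 1))) by (field; lra).
  replace (4 * digit_sd b h / (sqrt (digit_mean b h) * (Q - 1)))
    with (4 * digit_sd b h / sqrt (digit_mean b h) * (1 / (Q - 1))) by (field; lra).
  assert (0 <= 4 * digit_sd b h / sqrt (digit_mean b h))
    by (apply Rmult_le_pos; [lra | left; apply Rinv_0_lt_compat; lra]).
  apply Rplus_le_compat; [lra | apply Rmult_le_compat_l; auto].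
Qed.

Lemma step_bounds_of_B1_B3 b h n :
  (2 <= b)%nat -> h 1%nat = 1%nat -> (1 <= n)%nat ->
  4 * (1 + 3 * digit_mean b h + sqrt 2 * digit_sd b h * Rpower (INR b) (5 * INR n / 8))
    <= INR b ^ (n - 1) ->
  4 * digit_mean b h *
    (3 * digit_mean b h + 1 + Rpower (INR b) (3 * INR n / 4)
     + 2 * digit_sd b h * / sqrt (digit_mean b h) * Rpower (INR b) (5 * INR n / 8))
    <= INR b ^ (n - 1) ->
  step_bounds b h (eighth_power b n).
Proof.
  intros Hb h1 Hn B1 B3.
  assert (HRb : 0 < INR b) by (apply lt_0_INR; lia).
  assert (E5 : Rpower (INR b) (5 * INR n / 8) = eighth_power b n ^ 5)
    by (rewrite <- Rpower_eighth_power by lia; f_equal; simpl; field).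
  assert (E6 : Rpower (INR b) (3 * INR n / 4) = eighth_power b n ^ 6)
    by (rewrite <- Rpower_eighth_power by lia; f_equal; simpl; field).
  assert (E8 : INR b ^ (n - 1) = eighth_power b n ^ 8 / INR b).
  { rewrite <- pow_eighth_power by lia.
    replace (INR b ^ n) with (INR b ^ (n - 1) * INR b ^ 1) by (rewrite <- pow_add; f_equal; lia).
    field; lra. }
  assert (Hmu : 0 < digit_mean b h) by (apply digit_mean_pos; auto).
  assert (Hr : sqrt (digit_mean b h) * sqrt (digit_mean b h) = digit_mean b h)
    by (apply sqrt_sqrt; lra).
  assert (Hr0 : 0 < sqrt (digit_mean b h)) by (apply sqrt_lt_R0; auto).
  rewrite E5, E6, E8 in *; split; [lra|].
  replace (8 * sqrt (digit_mean b h) * digit_sd b h * eighth_power b n ^ 5)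
    with (4 * digit_mean b h * (2 * digit_sd b h * / sqrt (digit_mean b h) * eighth_power b n ^ 5))
    by (rewrite <- Hr at 1; field; lra).
  lra.
Qed.

Theorem theorem3p5 (b : nat) (h : nat -> nat) (C : nat -> Prop)
  (n1 a1 c1 : nat) :
  (1 < b)%nat ->
  h 0%nat = 0%nat -> h 1%nat = 1%nat ->
  (0 < n1)%nat ->
  (* (B1) *)
  4 * (1 + 3 * digit_mean b h
         + sqrt 2 * digit_sd b h * Rpower (INR b) (5 * INR n1 / 8))
    <= INR b ^ (n1 - 1) ->
  (* (B2) *)
  sqrt (3 * digit_mean b h * INR b) * digit_sd b h
    <= Rpower (INR b) (3 * INR n1 / 8) ->
  (* (B3) *)
  4 * digit_mean b h *
    (3 * digit_mean b h + 1 + Rpower (INR b) (3 * INR n1 / 4)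
     + 2 * digit_sd b h * / sqrt (digit_mean b h)
         * Rpower (INR b) (5 * INR n1 / 8))
    <= INR b ^ (n1 - 1) ->
  strict_interval b n1 a1 c1 ->
  forall N : nat, exists n a c : nat,
    (N < n)%nat /\ strict_interval b n a c /\
    typeC_density b h C a c >=
      typeC_density b h C a1 c1 *
      exp (- (2 / (Rpower (INR b) (INR n1 / 4) - 1))
           - 4 * digit_sd b h
             / (sqrt (digit_mean b h) * (Rpower (INR b) (INR n1 / 8) - 1))).
Proof.
  intros Hb h0 h1 Hn1 B1 _ B3 HS N.
  destruct (density_iterate b h C n1 a1 c1 Hb h0 h1 Hn1
              (step_bounds_of_B1_B3 b h n1 Hb h1 Hn1 B1 B3) HS N)
    as (n & a & c & Hn & _ & HSn & Hd).
  exists n, a, c; split; [nia|]; split; [auto|].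
  pose proof (rsum_step_loss_le b h (eighth_power b n1) N Hb h1 (eighth_power_gt1 b n1 Hb Hn1)).
  replace (eighth_power b n1 ^ 2) with (Rpower (INR b) (INR n1 / 4)) in *
    by (rewrite <- Rpower_eighth_power by lia; f_equal; simpl; field).
  pose proof (typeC_density_nonneg b h C a1 c1).
  apply Rge_le in Hd; apply Rle_ge, Rle_trans with (2 := Hd).
  apply Rmult_le_compat_l; auto; apply exp_le_compat; unfold eighth_power in *; lra.
Qed.
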